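(* Let $G$ be a group with a discrete left-invariant preordering $\preceq$, and let $a$ be a least positive element. Then for all $g,h\in G$: (1) if $1\preceq g$ and $1\preceq h$ then $1\prec agh$; (2) if $g\prec 1$ and $h\prec 1$ then $agh\prec 1$; (3) if $1\prec g$ then $1\prec aga^{-1}$ and $1\prec a^{-1}ga$; if $g\sim 1$ then $aga^{-1}\sim 1$ and $a^{-1}ga\sim 1$; if $g\prec 1$ then $aga^{-1}\prec 1$ and $a^{-1}ga\prec 1$.
   Context: A left-invariant preordering on a group $G$ is a relation $\preceq$ on $G$ that is reflexive, transitive and complete (for all $g,g'$ one has $g\preceq g'$ or $g'\preceq g$), and such that $g\preceq g'$ implies $hg\preceq hg'$ for all $h\in G$. Write $g\sim g'$ if $g\preceq g'$ and $g'\preceq g$, and $g\prec g'$ if $g\preceq g'$ and not $g\sim g'$. The preordering is discrete if there exists $a\in G$ with $1\prec a$ such that there is no $b\in G$ with $1\prec b\prec a$; such an $a$ is called a least positive element. *)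

Definition is_group {G : Type} (mul : G -> G -> G) (one : G) (inv : G -> G) : Prop :=
  (forall x y z, mul x (mul y z) = mul (mul x y) z) /\
  (forall x, mul one x = x) /\ (forall x, mul x one = x) /\
  (forall x, mul (inv x) x = one) /\ (forall x, mul x (inv x) = one).

Definition left_inv_preorder {G : Type} (mul : G -> G -> G) (le : G -> G -> Prop) : Prop :=
  (forall g, le g g) /\
  (forall g g' g'', le g g' -> le g' g'' -> le g g'') /\
  (forall g g', le g g' \/ le g' g) /\
  (forall g g' h, le g g' -> le (mul h g) (mul h g')).

Definition pequiv {G : Type} (le : G -> G -> Prop) (g g' : G) : Prop := le g g' /\ le g' g.
Definition plt {G : Type} (le : G -> G -> Prop) (g g' : G) : Prop := le g g' /\ ~ pequiv le g g'.

Definition least_positive {G : Type} (le : G -> G -> Prop) (one a : G) : Prop :=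
  plt le one a /\ ~ (exists b, plt le one b /\ plt le b a).

Definition discrete_preorder {G : Type} (le : G -> G -> Prop) (one : G) : Prop :=
  exists a, least_positive le one a.

(* A least positive [a] lies below every positive element.  Hence if [1 ≺ x] then
   [1 ≼ x a⁻¹] (otherwise [1 ≺ a x⁻¹], so [a ≼ a x⁻¹] and [x ≼ 1]), and so
   [1 ≺ a ≼ a (x a⁻¹)]; conversely [x ≼ 1] forces [a x a⁻¹ ≼ 1].  Conjugation by [a] thus
   maps the positive cone onto itself, and since it commutes with inversion it also
   preserves the negative elements and the class of [1].  Parts (1) and (2) follow from
   [a ≼ a y] for [1 ≼ y] and [a g ≼ 1] for [g ≺ 1]. *)
From Stdlib Require Import Classical.

Section OrderedGroup.

Context {G : Type} {mul : G -> G -> G} {one : G} {inv : G -> G} {le : G -> G -> Prop}.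
Hypothesis hG : is_group mul one inv.
Hypothesis hle : left_inv_preorder mul le.

Local Infix "·" := mul (at level 40, left associativity).
Local Notation "x ≼ y" := (le x y) (at level 70, no associativity).
Local Notation "x ≺ y" := (plt le x y) (at level 70, no associativity).
Local Notation "x ≈ y" := (pequiv le x y) (at level 70, no associativity).

Let mulA : forall x y z, x · (y · z) = x · y · z := proj1 hG.
Let mul1g : forall x, one · x = x := proj1 (proj2 hG).
Let mulg1 : forall x, x · one = x := proj1 (proj2 (proj2 hG)).
Let mulVg : forall x, inv x · x = one := proj1 (proj2 (proj2 (proj2 hG))).
Let mulgV : forall x, x · inv x = one := proj2 (proj2 (proj2 (proj2 hG))).

Let le_trans : forall x y z, x ≼ y -> y ≼ z -> x ≼ z := proj1 (proj2 hle).
Let le_total : forall x y, x ≼ y \/ y ≼ x := proj1 (proj2 (proj2 hle)).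
Let le_mull : forall x y h, x ≼ y -> h · x ≼ h · y := proj2 (proj2 (proj2 hle)).

Lemma mulKg x y : inv x · (x · y) = y.
Proof. rewrite mulA, mulVg, mul1g; reflexivity. Qed.

Lemma inv_unique x y : x · y = one -> inv x = y.
Proof. intro Hxy. rewrite <- (mulKg x y), Hxy, mulg1; reflexivity. Qed.

Lemma invgK x : inv (inv x) = x.
Proof. apply inv_unique, mulVg. Qed.

Lemma invMg x y : inv (x · y) = inv y · inv x.
Proof.
  apply inv_unique.
  rewrite mulA, <- (mulA x y), mulgV, mulg1, mulgV; reflexivity.
Qed.

Lemma conjgK b x : b · (inv b · x · b) · inv b = x.
Proof. rewrite !mulA, mulgV, mul1g, <- mulA, mulgV, mulg1; reflexivity. Qed.

Lemma conjgV b c x : c · b = one -> b · c = one -> b · inv x · c = inv (b · x · c).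
Proof.
  intros Hcb Hbc. symmetry; apply inv_unique.
  rewrite !mulA, <- (mulA _ c b), Hcb, mulg1, <- (mulA _ x), mulgV, mulg1, Hbc.
  reflexivity.
Qed.

Lemma lt_iff_not_ge x y : x ≺ y <-> ~ y ≼ x.
Proof.
  unfold plt, pequiv; split.
  - intros [Hxy Hneq] Hyx; apply Hneq; split; assumption.
  - intros Hyx; destruct (le_total x y) as [Hxy | Hxy].
    + split; [exact Hxy | intros [_ H]; contradiction].
    + contradiction.
Qed.

Lemma le_iff_not_gt x y : x ≼ y <-> ~ y ≺ x.
Proof. rewrite lt_iff_not_ge; split; [tauto | apply NNPP]. Qed.

Lemma equiv_iff_not_lt x y : x ≈ y <-> ~ x ≺ y /\ ~ y ≺ x.
Proof. unfold pequiv; rewrite !le_iff_not_gt; tauto. Qed.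

Lemma lt_le_trans x y z : x ≺ y -> y ≼ z -> x ≺ z.
Proof. rewrite !lt_iff_not_ge; intros Hyx Hyz Hzx; apply Hyx, (le_trans _ _ _ Hyz Hzx). Qed.

Lemma le_mul2l h x y : h · x ≼ h · y <-> x ≼ y.
Proof.
  split; [|apply le_mull].
  intro H; apply (le_mull _ _ (inv h)) in H; rewrite !mulKg in H; exact H.
Qed.

Lemma lt_mul2l h x y : h · x ≺ h · y <-> x ≺ y.
Proof. rewrite !lt_iff_not_ge, le_mul2l; reflexivity. Qed.

Lemma le_mulr_nonneg x y : one ≼ y -> x ≼ x · y.
Proof. rewrite <- (le_mul2l x), mulg1; trivial. Qed.

Lemma one_le_inv x : one ≼ inv x <-> x ≼ one.
Proof. rewrite <- (le_mul2l x), mulg1, mulgV; reflexivity. Qed.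

Lemma inv_le_one x : inv x ≼ one <-> one ≼ x.
Proof. rewrite <- (le_mul2l x), mulg1, mulgV; reflexivity. Qed.

Lemma one_lt_inv x : one ≺ inv x <-> x ≺ one.
Proof. rewrite !lt_iff_not_ge, inv_le_one; reflexivity. Qed.

Lemma mul_nonneg x y : one ≼ x -> one ≼ y -> one ≼ x · y.
Proof. intros Hx Hy; apply (le_trans _ x); [exact Hx | apply le_mulr_nonneg, Hy]. Qed.

Section PositivityPreserving.

Variable f : G -> G.
Hypothesis f_pos : forall x, one ≺ x <-> one ≺ f x.
Hypothesis f_inv : forall x, f (inv x) = inv (f x).

Lemma neg_iff_of_pos_iff x : x ≺ one <-> f x ≺ one.
Proof. rewrite <- !one_lt_inv, <- f_inv; apply f_pos. Qed.

Lemma equiv_one_iff_of_pos_iff x : x ≈ one <-> f x ≈ one.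
Proof. rewrite !equiv_iff_not_lt, neg_iff_of_pos_iff, <- f_pos; reflexivity. Qed.

End PositivityPreserving.

Section LeastPositive.

Variable a : G.
Hypothesis ha : least_positive le one a.

Let one_lt_a : one ≺ a := proj1 ha.

Lemma least_positive_le x : one ≺ x -> a ≼ x.
Proof.
  intro Hx; rewrite le_iff_not_gt; intro Hxa.
  apply (proj2 ha); exists x; split; assumption.
Qed.

Lemma nonneg_of_one_lt_mull x : one ≺ a · x -> one ≼ x.
Proof. intro Hax; rewrite <- (le_mul2l a), mulg1; apply least_positive_le, Hax. Qed.

Lemma one_le_mulVr_of_pos x : one ≺ x -> one ≼ x · inv a.
Proof.
  intro Hx; rewrite le_iff_not_gt, <- one_lt_inv, invMg, invgK.
  intro Hax; apply nonneg_of_one_lt_mull, one_le_inv in Hax.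
  rewrite lt_iff_not_ge in Hx; contradiction.
Qed.

Lemma conj_pos x : one ≺ x -> one ≺ a · x · inv a.
Proof.
  intro Hx; apply (lt_le_trans _ a); [exact one_lt_a|].
  rewrite <- mulA; apply le_mulr_nonneg, one_le_mulVr_of_pos, Hx.
Qed.

Lemma conj_nonpos x : x ≼ one -> a · x · inv a ≼ one.
Proof.
  intro Hx; rewrite le_iff_not_gt, <- mulA; intro Hc.
  apply nonneg_of_one_lt_mull in Hc.
  assert (Hinv : inv x ≼ inv a) by (rewrite <- (le_mul2l x), mulgV; exact Hc).
  apply one_le_inv in Hx.
  apply (le_trans _ _ _ Hx), one_le_inv in Hinv.
  rewrite lt_iff_not_ge in one_lt_a; contradiction.
Qed.

Lemma conj_pos_iff x : one ≺ x <-> one ≺ a · x · inv a.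
Proof.
  split; [apply conj_pos|].
  rewrite !lt_iff_not_ge; intros Hc Hx; apply Hc, conj_nonpos, Hx.
Qed.

Lemma conjV_pos_iff x : one ≺ x <-> one ≺ inv a · x · a.
Proof. rewrite (conj_pos_iff (inv a · x · a)), conjgK; reflexivity. Qed.

Lemma conj_inv x : a · inv x · inv a = inv (a · x · inv a).
Proof. apply conjgV; [apply mulVg | apply mulgV]. Qed.

Lemma conjV_inv x : inv a · inv x · a = inv (inv a · x · a).
Proof. apply conjgV; [apply mulgV | apply mulVg]. Qed.

Lemma least_positive_mul_nonneg g h : one ≼ g -> one ≼ h -> one ≺ a · (g · h).
Proof.
  intros Hg Hh; apply (lt_le_trans _ a); [exact one_lt_a|].
  apply le_mulr_nonneg, mul_nonneg; assumption.
Qed.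

Lemma least_positive_mul_neg g h : g ≺ one -> h ≺ one -> a · (g · h) ≺ one.
Proof.
  intros Hg Hh.
  assert (Hag : a · g ≼ one).
  { rewrite le_iff_not_gt; intro Hag; apply nonneg_of_one_lt_mull in Hag.
    rewrite lt_iff_not_ge in Hg; contradiction. }
  apply (lt_le_trans _ (a · g)); [|exact Hag].
  rewrite mulA; rewrite <- (mulg1 (a · g)) at 2; apply lt_mul2l, Hh.
Qed.

End LeastPositive.

End OrderedGroup.

Theorem mainTheorem3 (G : Type) (mul : G -> G -> G) (one : G) (inv : G -> G)
  (le : G -> G -> Prop) (a : G)
  (hG : is_group mul one inv)
  (hle : left_inv_preorder mul le)
  (hdisc : discrete_preorder le one)
  (ha : least_positive le one a) :
  forall g h : G,
    (le one g -> le one h -> plt le one (mul a (mul g h))) /\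
    (plt le g one -> plt le h one -> plt le (mul a (mul g h)) one) /\
    (plt le one g -> plt le one (mul (mul a g) (inv a)) /\ plt le one (mul (mul (inv a) g) a)) /\
    (pequiv le g one -> pequiv le (mul (mul a g) (inv a)) one /\ pequiv le (mul (mul (inv a) g) a) one) /\
    (plt le g one -> plt le (mul (mul a g) (inv a)) one /\ plt le (mul (mul (inv a) g) a) one).
Proof.
  pose proof (conj_pos_iff hG hle a ha) as conj_pos.
  pose proof (conjV_pos_iff hG hle a ha) as conjV_pos.
  pose proof (conj_inv hG a) as conj_inv.
  pose proof (conjV_inv hG a) as conjV_inv.
  intros g h; split; [|split; [|split; [|split]]]; [| |intro Hg; split..].
  - apply (least_positive_mul_nonneg hG hle a ha).
  - apply (least_positive_mul_neg hG hle a ha).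
  - exact (proj1 (conj_pos g) Hg).
  - exact (proj1 (conjV_pos g) Hg).
  - exact (proj1 (equiv_one_iff_of_pos_iff hG hle _ conj_pos conj_inv g) Hg).
  - exact (proj1 (equiv_one_iff_of_pos_iff hG hle _ conjV_pos conjV_inv g) Hg).
  - exact (proj1 (neg_iff_of_pos_iff hG hle _ conj_pos conj_inv g) Hg).
  - exact (proj1 (neg_iff_of_pos_iff hG hle _ conjV_pos conjV_inv g) Hg).
Qed.
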